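(* Let $p\in\mathbb{N}$, $\eta>0$ and write $x=\cosh\eta$. Then \[ \sum_{k=-p}^{p-1}\frac{(-1)^{k+1}e^{k\eta}R_p^k(x)}{p-k} =p!\,e^{p\eta}\sinh^p\eta\left\{\frac{(-1)^p}{(2p)!}\bigl[\psi(2p+1)-\psi(1)\bigr]P_p^p(\coth\eta)+\sum_{k=0}^{p-1}\frac{(-1)^k(2k+1)}{(p-k)(p+k+1)}P_k^{-p}(\coth\eta)\right\}. \]
   Context: $\psi$ is the digamma function. For $z>1$, $P_p^p(z)=(z^2-1)^{p/2}\frac{d^p}{dz^p}P_p(z)$ with $P_p$ the Legendre polynomial; for integers $k\ge0$, $m\ge1$, $P_k^{-m}(z)=\frac{1}{m!}\left(\frac{z-1}{z+1}\right)^{m/2}{}_2F_1\!\left(-k,k+1;1+m;\frac{1-z}{2}\right)$. The logarithmic polynomials $R_p^k(x)$, $p\in\mathbb{N}_0$, $k\in\mathbb{Z}$, are defined by $R_0^0(x)=1$, $R_0^k(x)=0$ for $k\ne0$, and $R_p^k(x)=\tfrac12 R_{p-1}^{k-1}(x)+xR_{p-1}^k(x)+\tfrac12 R_{p-1}^{k+1}(x)$ for $p\ge1$. *)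

From Stdlib Require Import Reals ZArith List.
From Coquelicot Require Import Coquelicot.
Open Scope R_scope.

(* Sum over integers a <= k <= b (empty if b < a). *)
Definition sumZ (a b : Z) (f : Z -> R) : R :=
  fold_right Rplus 0
    (map (fun i : nat => f (a + Z.of_nat i)%Z) (seq 0 (Z.to_nat (b - a + 1)))).

Definition euler_gamma : R :=
  real (Lim_seq (fun n => sum_n_m (fun k => / INR k) 1 n - ln (INR n))).

Definition digamma (z : R) : R :=
  - euler_gamma + Series (fun n => / (INR n + 1) - / (INR n + z)).

Fixpoint poch (a : R) (n : nat) : R :=
  match n with O => 1 | S m => poch a m * (a + INR m) end.

Definition hyp2F1 (a b c z : R) : R :=
  Series (fun n => poch a n * poch b n / (poch c n * INR (fact n)) * z ^ n).

(* Legendre polynomial P_n(x) = 2F1(-n, n+1; 1; (1-x)/2)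
   = sum_k C(n,k) C(n+k,k) ((x-1)/2)^k. *)
Definition legendreP (n : nat) (x : R) : R :=
  sum_n (fun k => Binomial.C n k * Binomial.C (n + k) k
                   * ((x - 1) / 2) ^ k) n.

Definition assocP_pp (p : nat) (z : R) : R :=
  Rpower (z ^ 2 - 1) (INR p / 2) * Derive_n (legendreP p) p z.

Definition assocP_neg (k m : nat) (z : R) : R :=
  / INR (fact m) * Rpower ((z - 1) / (z + 1)) (INR m / 2)
  * hyp2F1 (- INR k) (INR k + 1) (1 + INR m) ((1 - z) / 2).

Fixpoint logR (p : nat) (k : Z) (x : R) : R :=
  match p with
  | O => if Z.eqb k 0 then 1 else 0
  | S q => / 2 * logR q (k - 1)%Z x + x * logR q k x + / 2 * logR q (k + 1)%Z x
  end.

From Stdlib Require Import Reals ZArith List Lia Lra.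
From Coquelicot Require Import Coquelicot.
Open Scope R_scope.

(* Put t = e^eta > 1, so that cosh eta = (t + 1/t)/2 and coth eta = (t^2 + 1)/(t^2 - 1).
   Both sides become finite sums, and both equal
     (2t)^(-p) * sum_(m <= p) C(p,m) (t^2 - 1)^(p-m) (-1)^p H_(p+m),
   with H_n the harmonic numbers.
   Left side: the recursion of R_p^k gives
     t^k R_p^k = (2t)^(-p) sum_m C(p,m) C(p+m, k+m) (t^2 - 1)^(p-m),
   and summing over k against (-1)^(k+1)/(p-k) produces harmonic numbers through
     sum_(r < N) (-1)^(N+r+1) C(N,r)/(N-r) = H_N.
   Right side: psi(2p+1) - psi(1) = H_(2p), P_p^p(coth eta) = (2p)!/(p! 2^p) sinh^(-p) eta, and
   P_k^(-p)(coth eta) is a terminating hypergeometric sum in 1/(t^2 - 1).  After exchanging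
   the two finite sums everything reduces to
     sum_(k < p) (-1)^k (2k+1)/((p-k)(p+k+1)) (k+m)!/(k-m)!
       = (-1)^(p+1) (p+m)!/(p-m)! (H_(2p) - H_(p+m)),
   and the binomial expansion of (t^2)^p in powers of t^2 - 1 absorbs the H_(2p) term. *)

(* [fsum f n] is f 0 + ... + f (n - 1); unlike [sum_n] it can be empty. *)
Fixpoint fsum (f : nat -> R) (n : nat) : R :=
  match n with O => 0 | S m => fsum f m + f m end.

Lemma fsum_ext f g n : (forall i, (i < n)%nat -> f i = g i) -> fsum f n = fsum g n.
Proof.
  induction n as [|n IH]; intros Hfg; simpl; auto.
  rewrite IH, Hfg; auto; intros; apply Hfg; lia.
Qed.

Lemma fsum_eq0 f n : (forall i, (i < n)%nat -> f i = 0) -> fsum f n = 0.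
Proof.
  intros Hf; rewrite (fsum_ext f (fun _ => 0)) by auto.
  clear Hf; induction n; simpl; lra.
Qed.

Lemma fsum_plus f g n : fsum (fun i => f i + g i) n = fsum f n + fsum g n.
Proof. induction n; simpl; lra. Qed.

Lemma fsum_minus f g n : fsum (fun i => f i - g i) n = fsum f n - fsum g n.
Proof. induction n; simpl; lra. Qed.

Lemma fsum_scal c f n : fsum (fun i => c * f i) n = c * fsum f n.
Proof. induction n; simpl; lra. Qed.

Lemma fsum_first f n : fsum f (S n) = f O + fsum (fun i => f (S i)) n.
Proof. induction n; simpl in *; lra. Qed.

Lemma fsum_split f a b : fsum f (a + b) = fsum f a + fsum (fun i => f (a + i)%nat) b.
Proof.
  induction b as [|b IH]; simpl.
  - rewrite Nat.add_0_r; lra.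
  - rewrite Nat.add_succ_r; simpl; rewrite IH; lra.
Qed.

Lemma fsum_rev f n : fsum f n = fsum (fun i => f (n - S i)%nat) n.
Proof.
  induction n as [|n IH]; auto.
  rewrite (fsum_first (fun i => f (S n - S i)%nat)); simpl fsum.
  rewrite IH, Rplus_comm; f_equal; f_equal; lia.
Qed.

Lemma fsum_swap (g : nat -> nat -> R) n m :
  fsum (fun i => fsum (fun j => g i j) m) n = fsum (fun j => fsum (fun i => g i j) n) m.
Proof.
  induction n as [|n IH]; simpl.
  - symmetry; apply fsum_eq0; auto.
  - rewrite IH, <- fsum_plus; reflexivity.
Qed.

Lemma sum_n_fsum (a : nat -> R) N : sum_n a N = fsum a (S N).
Proof.
  induction N as [|N IH].
  - rewrite sum_O; simpl; lra.
  - rewrite sum_Sn, IH; reflexivity.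
Qed.

Lemma sum_f_R0_fsum (a : nat -> R) N : sum_f_R0 a N = fsum a (S N).
Proof. induction N; simpl in *; lra. Qed.

Lemma fold_map_seq_fsum (g : nat -> R) s n :
  fold_right Rplus 0 (map g (seq s n)) = fsum (fun i => g (s + i)%nat) n.
Proof.
  revert s; induction n as [|n IH]; intros s; [reflexivity|].
  rewrite fsum_first; cbn [seq map fold_right]; rewrite IH, Nat.add_0_r.
  f_equal; apply fsum_ext; intros; f_equal; lia.
Qed.

Lemma sumZ_fsum a n f :
  sumZ a (a + Z.of_nat n - 1) f = fsum (fun i => f (a + Z.of_nat i)%Z) n.
Proof.
  unfold sumZ; replace (Z.to_nat (a + Z.of_nat n - 1 - a + 1)) with n by lia.
  apply fold_map_seq_fsum.
Qed.

Lemma sumZ_ext a b f g : (forall k, f k = g k) -> sumZ a b f = sumZ a b g.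
Proof. intros Hfg; unfold sumZ; f_equal; apply map_ext; auto. Qed.

Lemma Series_finite (a : nat -> R) N :
  (forall n, (N < n)%nat -> a n = 0) -> Series a = fsum a (S N).
Proof.
  intros Hz; apply is_series_unique.
  enough (Hlim : is_lim_seq (sum_n a) (fsum a (S N))) by exact Hlim.
  apply (is_lim_seq_ext_loc (fun _ => fsum a (S N))); [|apply is_lim_seq_const].
  exists N; intros n Hn; rewrite sum_n_fsum.
  replace (S n) with (S N + (n - N))%nat by lia.
  rewrite fsum_split, (fsum_eq0 (fun i => a (S N + i)%nat)); [ring|].
  intros; apply Hz; lia.
Qed.

Lemma pow_m1_add_even a b c : (a + 2 * c = b)%nat -> (-1) ^ a = (-1) ^ b.
Proof. intros <-; rewrite pow_add, pow_1_even; ring. Qed.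

Lemma pow_m1_sqr n : (-1) ^ n * (-1) ^ n = 1.
Proof. rewrite <- pow_add, <- (pow_m1_add_even 0 (n + n) n) by lia; ring. Qed.

(* [Binomial.C n k] is a junk value for k > n. *)
Definition binom (n k : nat) : R := if (k <=? n)%nat then Binomial.C n k else 0.

Definition binomZ (n : nat) (z : Z) : R :=
  if (z <? 0)%Z then 0 else binom n (Z.to_nat z).

Definition harmonic (n : nat) : R := fsum (fun i => / INR (S i)) n.

Lemma binom_n_0 n : binom n 0 = 1.
Proof. apply C_n_0. Qed.

Lemma binom_over n k : (n < k)%nat -> binom n k = 0.
Proof. intros; unfold binom; destruct (Nat.leb_spec k n); auto; lia. Qed.

Lemma binom_fact n k : (k <= n)%nat ->
  binom n k = INR (fact n) / (INR (fact k) * INR (fact (n - k))).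
Proof. intros; unfold binom; destruct (Nat.leb_spec k n); [reflexivity|lia]. Qed.

Lemma binom_sym n k : (k <= n)%nat -> binom n k = binom n (n - k).
Proof.
  intros; unfold binom.
  destruct (Nat.leb_spec k n); destruct (Nat.leb_spec (n - k) n); try lia.
  apply pascal_step1; auto.
Qed.

Lemma binom_pascal n k : binom (S n) (S k) = binom n k + binom n (S k).
Proof.
  unfold binom.
  destruct (Nat.leb_spec (S k) (S n)); destruct (Nat.leb_spec k n);
    destruct (Nat.leb_spec (S k) n); try lia; try lra.
  - symmetry; apply pascal; lia.
  - replace k with n by lia; rewrite !C_n_n; lra.
Qed.

Lemma binomZ_pascal n z : binomZ (S n) z = binomZ n (z - 1) + binomZ n z.
Proof.
  unfold binomZ; destruct (Z.ltb_spec z 0), (Z.ltb_spec (z - 1) 0); try lia; try lra.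
  - replace z with 0%Z by lia; rewrite !binom_n_0; lra.
  - replace (Z.to_nat z) with (S (Z.to_nat (z - 1))) by lia.
    rewrite binom_pascal; lra.
Qed.

Lemma binom_absorption n k : INR (S k) * binom (S n) (S k) = INR (S n) * binom n k.
Proof.
  destruct (Nat.leb_spec k n).
  - rewrite !binom_fact by lia; replace (S n - S k)%nat with (n - k)%nat by lia.
    rewrite !fact_simpl, !mult_INR.
    pose proof (INR_fact_lt_0 k); pose proof (INR_fact_lt_0 (n - k)).
    field; repeat split; try lra; apply not_0_INR; lia.
  - rewrite !binom_over by lia; lra.
Qed.

Lemma binomial_one_plus (y : R) n :
  (1 + y) ^ n = fsum (fun m => binom n m * y ^ (n - m)) (S n).
Proof.
  rewrite binomial, sum_f_R0_fsum; apply fsum_ext; intros i Hi.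
  unfold binom; destruct (Nat.leb_spec i n); try lia; rewrite pow1; lra.
Qed.

Lemma binom_alternating_sum n :
  fsum (fun i => (-1) ^ i * binom (S n) i) (S (S n)) = 0.
Proof.
  pose proof (binomial (-1) 1 (S n)) as Hb; rewrite sum_f_R0_fsum in Hb.
  replace (-1 + 1) with 0 in Hb by lra; rewrite pow_i in Hb by lia.
  rewrite Hb; apply fsum_ext; intros i Hi.
  unfold binom; destruct (Nat.leb_spec i (S n)); try lia; rewrite pow1; lra.
Qed.

Lemma binom_alternating_tail n :
  fsum (fun i => (-1) ^ i * binom (S n) (S i)) (S n) = 1.
Proof.
  pose proof (binom_alternating_sum n) as Hsum.
  rewrite fsum_first, binom_n_0 in Hsum.
  rewrite (fsum_ext (fun i => (-1) ^ S i * binom (S n) (S i))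
                     (fun i => -1 * ((-1) ^ i * binom (S n) (S i)))) in Hsum
    by (intros; simpl; ring).
  rewrite fsum_scal in Hsum; simpl pow in Hsum; lra.
Qed.

Lemma harmonic_binom_alternating n :
  fsum (fun i => (-1) ^ i * binom n (S i) / INR (S i)) n = harmonic n.
Proof.
  induction n as [|n IH]; [reflexivity|].
  assert (Hsplit : fsum (fun i => (-1) ^ i * binom (S n) (S i) / INR (S i)) (S n)
               = fsum (fun i => (-1) ^ i * binom n (S i) / INR (S i)) (S n)
                 + / INR (S n) * fsum (fun i => (-1) ^ i * binom (S n) (S i)) (S n)).
  { rewrite <- fsum_scal, <- fsum_plus; apply fsum_ext; intros i Hi.
    rewrite (binom_pascal n i) at 1.
    assert (INR (S i) <> 0) by (apply not_0_INR; lia).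
    assert (INR (S n) <> 0) by (apply not_0_INR; lia).
    replace (binom n i) with (INR (S i) * binom (S n) (S i) / INR (S n))
      by (rewrite binom_absorption; field; auto).
    field; auto. }
  rewrite Hsplit, binom_alternating_tail; cbn [fsum].
  rewrite (binom_over n (S n)), IH by lia.
  unfold harmonic; cbn [fsum]; lra.
Qed.

Lemma harmonic_binom_sum n :
  fsum (fun r => (-1) ^ (n + r + 1) * binom n r / (INR n - INR r)) n = harmonic n.
Proof.
  rewrite fsum_rev, <- harmonic_binom_alternating; apply fsum_ext; intros i Hi.
  replace (INR n - INR (n - S i)) with (INR (S i))
    by (rewrite minus_INR by lia; rewrite S_INR; ring).
  rewrite binom_sym by lia; replace (n - (n - S i))%nat with (S i) by lia.
  rewrite <- (pow_m1_add_even i _ (n - S i + 1)) by lia; reflexivity.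
Qed.

Lemma fsum_binom_pascal (g : nat -> R) n :
  fsum (fun m => binom (S n) m * g m) (S (S n))
  = fsum (fun m => binom n m * (g m + g (S m))) (S n).
Proof.
  assert (Hshift : fsum (fun m => binom n m * g m) (S n)
                   = g O + fsum (fun i => binom n (S i) * g (S i)) (S n)).
  { rewrite fsum_first, binom_n_0; cbn [fsum]; rewrite (binom_over n (S n)) by lia; ring. }
  rewrite fsum_first, binom_n_0.
  rewrite (fsum_ext (fun i => binom (S n) (S i) * g (S i))
                    (fun i => binom n (S i) * g (S i) + binom n i * g (S i)))
    by (intros; rewrite binom_pascal; ring).
  rewrite (fsum_ext (fun m => binom n m * (g m + g (S m)))
                    (fun m => binom n m * g m + binom n m * g (S m))) by (intros; ring).
  rewrite !fsum_plus, Hshift; ring.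
Qed.

Definition logR_numer (y : R) (p : nat) (k : Z) : R :=
  fsum (fun m => binom p m * (binomZ (p + m) (k + Z.of_nat m) * y ^ (p - m))) (S p).

Lemma logR_numer_succ y p k :
  logR_numer y (S p) k
  = (1 + y) * logR_numer y p (k - 1) + (2 + y) * logR_numer y p k + logR_numer y p (k + 1).
Proof.
  unfold logR_numer at 1.
  rewrite (fsum_binom_pascal (fun m => binomZ (S p + m) (k + Z.of_nat m) * y ^ (S p - m))).
  unfold logR_numer; rewrite <- !fsum_scal, <- !fsum_plus.
  apply fsum_ext; intros m Hm.
  replace (S p + S m)%nat with (S (S (p + m))) by lia.
  replace (S p + m)%nat with (S (p + m)) by lia.
  replace (S p - m)%nat with (S (p - m)) by lia.
  replace (S p - S m)%nat with (p - m)%nat by lia.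
  replace (k + Z.of_nat (S m))%Z with (k + Z.of_nat m + 1)%Z by lia.
  rewrite !binomZ_pascal.
  replace (k + Z.of_nat m + 1 - 1)%Z with (k + Z.of_nat m)%Z by lia.
  replace (k + Z.of_nat m - 1)%Z with (k - 1 + Z.of_nat m)%Z by lia.
  replace (k + Z.of_nat m + 1)%Z with (k + 1 + Z.of_nat m)%Z by lia.
  simpl pow; ring.
Qed.

Lemma logR_closed_form t p k : 0 < t ->
  powerRZ t k * logR p k ((t + / t) / 2) = logR_numer (t ^ 2 - 1) p k / (2 * t) ^ p.
Proof.
  intros Ht; revert k; induction p as [|p IH]; intros k.
  - unfold logR_numer, binomZ; cbn [logR fsum]; rewrite binom_n_0, Z.add_0_r.
    destruct (Z.eqb_spec k 0) as [->|Hk]; [simpl; rewrite binom_n_0; field|].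
    destruct (Z.ltb_spec k 0); [field|].
    rewrite binom_over by lia; field.
  - assert (Hdown : powerRZ t k = t * powerRZ t (k - 1)).
    { replace k with (k - 1 + 1)%Z at 1 by lia; rewrite powerRZ_add by lra; simpl; ring. }
    assert (Hup : powerRZ t k = / t * powerRZ t (k + 1)).
    { replace k with (k + 1 + -1)%Z at 1 by lia; rewrite powerRZ_add by lra; simpl; field; lra. }
    transitivity (t / 2 * (powerRZ t (k - 1) * logR p (k - 1) ((t + / t) / 2))
      + (t + / t) / 2 * (powerRZ t k * logR p k ((t + / t) / 2))
      + / (2 * t) * (powerRZ t (k + 1) * logR p (k + 1) ((t + / t) / 2))).
    { cbn [logR]; rewrite !Rmult_plus_distr_l.
      f_equal; [f_equal|]; [rewrite Hdown | ring | rewrite Hup]; field; lra. }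
    rewrite !IH, logR_numer_succ; simpl pow.
    field; split; [apply pow_nonzero|]; lra.
Qed.

Lemma powerRZ_m1_sub (b c : nat) : powerRZ (-1) (Z.of_nat b - Z.of_nat c) = (-1) ^ (b + c).
Proof.
  unfold Z.sub; rewrite powerRZ_add, powerRZ_neg', <- !pow_powerRZ by lra.
  rewrite pow_add, <- pow_inv; f_equal; f_equal; field.
Qed.

Lemma fsum_alt_binomZ_harmonic p m : (m <= p)%nat ->
  fsum (fun i => (-1) ^ (i + p + 1) * binomZ (p + m) (- Z.of_nat p + Z.of_nat i + Z.of_nat m)
                 / (INR (2 * p) - INR i)) (2 * p)
  = (-1) ^ p * harmonic (p + m).
Proof.
  intros Hm.
  match goal with |- fsum ?f _ = _ =>
    replace (fsum f (2 * p)) with (fsum f ((p - m) + (p + m))) by (f_equal; lia) end.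
  rewrite fsum_split, fsum_eq0, Rplus_0_l.
  2: { intros i Hi; unfold binomZ; destruct (Z.ltb_spec (- Z.of_nat p + Z.of_nat i + Z.of_nat m) 0);
       [lra|lia]. }
  rewrite <- harmonic_binom_sum, <- fsum_scal; apply fsum_ext; intros r Hr.
  replace (- Z.of_nat p + Z.of_nat (p - m + r) + Z.of_nat m)%Z with (Z.of_nat r) by lia.
  unfold binomZ; destruct (Z.ltb_spec (Z.of_nat r) 0); [lia|]; rewrite Nat2Z.id.
  replace (INR (2 * p) - INR (p - m + r)) with (INR (p + m) - INR r)
    by (rewrite !plus_INR, mult_INR, minus_INR by lia; simpl; ring).
  rewrite (pow_m1_add_even (p - m + r + p + 1) (p + (p + m + r + 1)) m), pow_add by lia.
  unfold Rdiv; ring.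
Qed.

Lemma sumZ_logR_closed_form p t : 0 < t ->
  sumZ (- Z.of_nat p) (Z.of_nat p - 1)
    (fun k => powerRZ (-1) (k + 1) * powerRZ t k * logR p k ((t + / t) / 2)
              / IZR (Z.of_nat p - k))
  = / (2 * t) ^ p
    * fsum (fun m => binom p m * (t ^ 2 - 1) ^ (p - m) * ((-1) ^ p * harmonic (p + m))) (S p).
Proof.
  intros Ht.
  replace (Z.of_nat p - 1)%Z with (- Z.of_nat p + Z.of_nat (2 * p) - 1)%Z by lia.
  rewrite sumZ_fsum.
  transitivity (/ (2 * t) ^ p * fsum (fun i => fsum (fun m =>
     binom p m * (t ^ 2 - 1) ^ (p - m) *
     ((-1) ^ (i + p + 1) * binomZ (p + m) (- Z.of_nat p + Z.of_nat i + Z.of_nat m)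
      / (INR (2 * p) - INR i))) (S p)) (2 * p)).
  - rewrite <- fsum_scal; apply fsum_ext; intros i Hi.
    rewrite Rmult_assoc, logR_closed_form by auto.
    replace (- Z.of_nat p + Z.of_nat i + 1)%Z with (Z.of_nat (i + 1) - Z.of_nat p)%Z by lia.
    rewrite powerRZ_m1_sub; replace (i + 1 + p)%nat with (i + p + 1)%nat by lia.
    replace (IZR (Z.of_nat p - (- Z.of_nat p + Z.of_nat i))) with (INR (2 * p) - INR i)
      by (rewrite !INR_IZR_INZ, <- minus_IZR; f_equal; lia).
    unfold logR_numer, Rdiv.
    match goal with |- ?a * (fsum ?f ?n * ?b) * ?c = _ =>
      transitivity (a * b * c * fsum f n); [ring|] end.
    rewrite <- !fsum_scal; apply fsum_ext; intros m Hm; ring.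
  - f_equal; rewrite fsum_swap; apply fsum_ext; intros m Hm.
    rewrite fsum_scal, fsum_alt_binomZ_harmonic by lia; reflexivity.
Qed.

(* [legendre_prod n k = (k+n)! / (k-n)!] for integers [k >= n]; up to the sign [(-1)^n]
   it is the numerator [(-k)_n (k+1)_n] of the n-th coefficient of [2F1(-k, k+1; c; z)]. *)
Fixpoint legendre_prod (n : nat) (k : R) : R :=
  match n with O => 1 | S m => legendre_prod m k * (k + INR m + 1) * (k - INR m) end.

Lemma legendre_prod_nat_lt n k : (k < n)%nat -> legendre_prod n (INR k) = 0.
Proof.
  induction n as [|n IH]; intros Hk; [lia|]; simpl.
  destruct (Nat.eq_dec k n) as [->|]; [ring|]; rewrite IH by lia; ring.
Qed.

Lemma legendre_prod_succ_arg n k :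
  legendre_prod n (k + 1) * (k - INR n + 1) = legendre_prod n k * (k + INR n + 1).
Proof.
  induction n as [|n IH]; cbn [legendre_prod]; [simpl; ring|].
  rewrite S_INR.
  transitivity (legendre_prod n (k + 1) * (k - INR n + 1) * (k + INR n + 2) * (k - INR n));
    [ring|].
  rewrite IH; ring.
Qed.

Lemma poch_opp_mul_poch_succ n k :
  poch (- k) n * poch (k + 1) n = (-1) ^ n * legendre_prod n k.
Proof.
  induction n as [|n IH]; cbn [legendre_prod poch pow]; [ring|].
  transitivity (poch (- k) n * poch (k + 1) n * ((- k + INR n) * (k + 1 + INR n))); [ring|].
  rewrite IH; ring.
Qed.

Lemma legendre_prod_nat n p : (n <= p)%nat ->
  legendre_prod n (INR p) = poch (1 + INR p) n * INR (fact n) * binom p n.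
Proof.
  intros Hn; rewrite binom_fact by auto.
  assert (Hfact : forall m, (m <= p)%nat ->
            legendre_prod m (INR p) * INR (fact (p - m)) = poch (1 + INR p) m * INR (fact p)).
  { clear n Hn; induction m as [|m IH]; intros Hm; cbn [legendre_prod poch].
    - rewrite Nat.sub_0_r; ring.
    - replace (p - m)%nat with (S (p - S m)) in IH by lia.
      rewrite fact_simpl, mult_INR in IH.
      replace (INR (S (p - S m))) with (INR p - INR m) in IH
        by (rewrite S_INR, minus_INR by lia; rewrite S_INR; ring).
      transitivity (poch (1 + INR p) m * INR (fact p) * (INR p + INR m + 1));
        [rewrite <- IH by lia|]; ring. }
  pose proof (INR_fact_lt_0 (p - n)); pose proof (INR_fact_lt_0 n).
  apply (Rmult_eq_reg_r (INR (fact (p - n)))); [|lra].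
  rewrite Hfact by auto; field; lra.
Qed.

Lemma fsum_alt_legendre_prod n p :
  fsum (fun k => (-1) ^ k * (2 * INR k + 1) * legendre_prod n (INR k)) p
  = (-1) ^ (p + 1) * (INR p - INR n) * legendre_prod n (INR p).
Proof.
  induction p as [|p IH].
  - cbn [fsum]; destruct n; [simpl; ring|].
    rewrite (legendre_prod_nat_lt (S n) 0) by lia; ring.
  - simpl fsum; rewrite IH, S_INR.
    transitivity ((-1) ^ p * (legendre_prod n (INR p) * (INR p + INR n + 1)));
      [rewrite Nat.add_1_r; simpl pow; ring|].
    rewrite <- legendre_prod_succ_arg.
    replace (S p + 1)%nat with (p + 2)%nat by lia; rewrite pow_add; simpl pow; ring.
Qed.

Definition alt_harmonic (n : nat) : R := fsum (fun j => (-1) ^ j / INR (S j)) n.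

Lemma alt_harmonic_double p : alt_harmonic (2 * p) = harmonic (2 * p) - harmonic p.
Proof.
  induction p as [|p IH]; [unfold alt_harmonic, harmonic; simpl; ring|].
  replace (2 * S p)%nat with (S (S (2 * p))) by lia.
  unfold alt_harmonic, harmonic in *; cbn [fsum]; rewrite IH.
  change ((-1) ^ S (2 * p)) with (-1 * (-1) ^ (2 * p)); rewrite pow_1_even.
  rewrite !S_INR, mult_INR; change (INR 2) with 2; pose proof (pos_INR p).
  field; repeat split; apply Rgt_not_eq; lra.
Qed.

(* Partial fractions: [(2k+1) / ((p-k)(p+k+1)) = 1/(p-k) - 1/(p+k+1)]. *)
Lemma fsum_legendre_weight p :
  fsum (fun k => (-1) ^ k * (2 * INR k + 1) / ((INR p - INR k) * (INR p + INR k + 1))) p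
  = (-1) ^ (p + 1) * (harmonic (2 * p) - harmonic p).
Proof.
  assert (Hlow : fsum (fun k => (-1) ^ k / (INR p - INR k)) p = (-1) ^ (p + 1) * alt_harmonic p).
  { unfold alt_harmonic; rewrite fsum_rev, <- fsum_scal; apply fsum_ext; intros j Hj.
    replace (INR p - INR (p - S j)) with (INR (S j))
      by (rewrite minus_INR by lia; rewrite !S_INR; ring).
    rewrite (pow_m1_add_even (p - S j) (p + 1 + j) (S j)), pow_add by lia.
    unfold Rdiv; ring. }
  assert (Hhigh : alt_harmonic (2 * p)
                  = alt_harmonic p + (-1) ^ p * fsum (fun k => (-1) ^ k / (INR p + INR k + 1)) p).
  { unfold alt_harmonic; replace (2 * p)%nat with (p + p)%nat by lia.
    rewrite fsum_split, <- fsum_scal; f_equal; apply fsum_ext; intros.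
    rewrite pow_add, S_INR, plus_INR; unfold Rdiv; ring. }
  rewrite alt_harmonic_double in Hhigh.
  transitivity (fsum (fun k => (-1) ^ k / (INR p - INR k)) p
                - fsum (fun k => (-1) ^ k / (INR p + INR k + 1)) p).
  { rewrite <- fsum_minus; apply fsum_ext; intros k Hk.
    assert (INR k < INR p) by (apply lt_INR; auto); pose proof (pos_INR k).
    field; lra. }
  replace (fsum (fun k => (-1) ^ k / (INR p + INR k + 1)) p)
    with ((-1) ^ p * (harmonic (2 * p) - harmonic p - alt_harmonic p))
    by (rewrite Hhigh; transitivity ((-1) ^ p * (-1) ^ p
          * fsum (fun k => (-1) ^ k / (INR p + INR k + 1)) p); [ring|rewrite pow_m1_sqr; ring]).
  rewrite Hlow, pow_add; simpl pow; ring.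
Qed.

(* Induction on n: [legendre_prod (S n) k] is [legendre_prod n k] times
   [(p-n)(p+n+1) - (p-k)(p+k+1)], which cancels the weight's denominator. *)
Lemma fsum_legendre_weight_prod n p :
  fsum (fun k => (-1) ^ k * (2 * INR k + 1) / ((INR p - INR k) * (INR p + INR k + 1))
                 * legendre_prod n (INR k)) p
  = (-1) ^ (p + 1) * legendre_prod n (INR p) * (harmonic (2 * p) - harmonic (p + n)).
Proof.
  induction n as [|n IH].
  - cbn [legendre_prod]; rewrite Nat.add_0_r, Rmult_1_r, <- fsum_legendre_weight.
    apply fsum_ext; intros; ring.
  - transitivity ((INR p - INR n) * (INR p + INR n + 1) *
       fsum (fun k => (-1) ^ k * (2 * INR k + 1) / ((INR p - INR k) * (INR p + INR k + 1))
                      * legendre_prod n (INR k)) p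
       - fsum (fun k => (-1) ^ k * (2 * INR k + 1) * legendre_prod n (INR k)) p).
    { rewrite <- fsum_scal, <- fsum_minus; apply fsum_ext; intros k Hk; cbn [legendre_prod].
      assert (INR k < INR p) by (apply lt_INR; auto); pose proof (pos_INR k).
      field; lra. }
    rewrite IH, fsum_alt_legendre_prod.
    replace (p + S n)%nat with (S (p + n)) by lia.
    change (harmonic (S (p + n))) with (harmonic (p + n) + / INR (S (p + n))).
    cbn [legendre_prod]; rewrite S_INR, plus_INR.
    pose proof (pos_INR p); pose proof (pos_INR n).
    field; lra.
Qed.

Lemma is_lim_seq_fsum_inv_shift n :
  is_lim_seq (fun K => fsum (fun i => / INR (K + S i)) n) 0.
Proof.
  induction n as [|n IH]; [apply is_lim_seq_const|].
  replace (Finite 0) with (Finite (0 + 0)) by (f_equal; ring).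
  apply is_lim_seq_plus'; [exact IH|].
  assert (Hinf : is_lim_seq (fun K => INR (K + S n)) p_infty)
    by (apply (is_lim_seq_incr_n INR (S n)), is_lim_seq_INR).
  apply is_lim_seq_inv in Hinf; [exact Hinf|discriminate].
Qed.

Lemma fsum_digamma_telescope n K :
  fsum (fun j => / (INR j + 1) - / (INR j + (INR n + 1))) K
  = harmonic n - fsum (fun i => / INR (K + S i)) n.
Proof.
  induction K as [|K IH]; [unfold harmonic; simpl; ring|].
  cbn [fsum]; rewrite IH.
  assert (Hshift : fsum (fun i => / INR (S K + S i)) n
                   = fsum (fun i => / INR (K + S i)) n + / INR (K + S n) - / INR (K + 1)).
  { pose proof (fsum_first (fun i => / INR (K + S i)) n) as Hfirst; cbn [fsum] in Hfirst.
    rewrite (fsum_ext (fun i => / INR (S K + S i)) (fun i => / INR (K + S (S i))))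
      by (intros; do 2 f_equal; lia).
    replace (K + 1)%nat with (K + S 0)%nat by lia; lra. }
  rewrite Hshift, !plus_INR, !S_INR; simpl (INR 0); rewrite Rplus_0_l; ring.
Qed.

Lemma digamma_nat_succ n : digamma (INR n + 1) = - euler_gamma + harmonic n.
Proof.
  unfold digamma; f_equal; apply is_series_unique.
  enough (Hlim : is_lim_seq (sum_n (fun j => / (INR j + 1) - / (INR j + (INR n + 1))))
                            (harmonic n)) by exact Hlim.
  apply (is_lim_seq_ext (fun K => harmonic n - fsum (fun i => / INR (S K + S i)) n)).
  - intros K; rewrite sum_n_fsum, fsum_digamma_telescope; reflexivity.
  - replace (Finite (harmonic n)) with (Finite (harmonic n - 0)) by (f_equal; ring).
    apply is_lim_seq_minus'; [apply is_lim_seq_const|].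
    apply (is_lim_seq_incr_1 (fun K => fsum (fun i => / INR (K + S i)) n)).
    apply is_lim_seq_fsum_inv_shift.
Qed.

Lemma digamma_nat_succ_sub_1 n : digamma (INR n + 1) - digamma 1 = harmonic n.
Proof.
  replace 1 with (INR 0 + 1) at 2 by (simpl; ring).
  rewrite !digamma_nat_succ; unfold harmonic; simpl; ring.
Qed.

Lemma Derive_n_scal_shifted_pow c k n z :
  Derive_n (fun y => c * (y + -1) ^ k) n z
  = c * (if le_dec n k then INR (fact k) / INR (fact (k - n)) * (z + -1) ^ (k - n) else 0).
Proof.
  rewrite (Derive_n_scal_l (fun y => (y + -1) ^ k)).
  rewrite (Derive_n_comp_trans (fun u => u ^ k)), Derive_n_pow; reflexivity.
Qed.

Lemma legendreP_Derive_n_top p z :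
  Derive_n (legendreP p) p z = INR (fact (2 * p)) / (INR (fact p) * 2 ^ p).
Proof.
  set (c := fun k => Binomial.C p k * Binomial.C (p + k) k * (/ 2) ^ k).
  rewrite (Derive_n_ext (legendreP p) (fun y => sum_n (fun k => c k * (y + -1) ^ k) p)).
  2: { intros y; unfold legendreP; apply sum_n_ext; intros k.
       assert (Hterm : Binomial.C p k * Binomial.C (p + k) k * ((y - 1) / 2) ^ k
                       = c k * (y + -1) ^ k)
         by (unfold c, Rdiv; rewrite Rpow_mult_distr; replace (y + -1) with (y - 1) by ring; ring).
       exact Hterm. }
  rewrite (Derive_n_sum_n p (fun k y => c k * (y + -1) ^ k)).
  2: { exists (mkposreal _ Rlt_0_1); intros y _ l j _ _.
       apply (ex_derive_n_scal_l (fun y => (y + -1) ^ l)).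
       apply (ex_derive_n_comp_trans (fun u => u ^ l)), ex_derive_n_pow. }
  rewrite sum_n_fsum; cbn [fsum]; rewrite fsum_eq0.
  2: { intros k Hk; rewrite Derive_n_scal_shifted_pow.
       destruct (le_dec p k); [lia|ring]. }
  rewrite Derive_n_scal_shifted_pow; destruct (le_dec p p); [|lia].
  unfold c; rewrite Nat.sub_diag, !pow_O, C_n_n; unfold Binomial.C.
  replace (p + p - p)%nat with p by lia; replace (p + p)%nat with (2 * p)%nat by lia.
  pose proof (INR_fact_lt_0 p); rewrite pow_inv; simpl (INR (fact 0)).
  field; split; [apply pow_nonzero|]; lra.
Qed.

Lemma Rpower_sqr_half a n : 0 < a -> Rpower (a ^ 2) (INR n / 2) = a ^ n.
Proof.
  intros Ha; rewrite <- (Rpower_pow 2 a), Rpower_mult by auto.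
  replace (INR 2 * (INR n / 2)) with (INR n) by (simpl; field).
  apply Rpower_pow; auto.
Qed.

Lemma poch_opp_nat_over k n : (k < n)%nat -> poch (- INR k) n = 0.
Proof.
  induction n as [|n IH]; intros Hk; [lia|]; simpl.
  destruct (Nat.eq_dec k n) as [->|]; [ring|]; rewrite IH by lia; ring.
Qed.

Section CothOfExp.

Variable t : R.
Hypothesis Ht : 1 < t.

Local Notation ch := ((t + / t) / 2).
Local Notation sh := ((t - / t) / 2).

Lemma sh_eq : sh = (t ^ 2 - 1) / (2 * t).
Proof. field; lra. Qed.

Lemma sh_pos : 0 < sh.
Proof. rewrite sh_eq; apply Rdiv_lt_0_compat; nra. Qed.

Lemma assocP_pp_coth p :
  assocP_pp p (ch / sh) = (/ sh) ^ p * (INR (fact (2 * p)) / (INR (fact p) * 2 ^ p)).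
Proof.
  pose proof sh_pos as Hsh.
  unfold assocP_pp; rewrite legendreP_Derive_n_top; f_equal.
  replace ((ch / sh) ^ 2 - 1) with ((/ sh) ^ 2) by (field; split; nra).
  apply Rpower_sqr_half, Rinv_0_lt_compat, Hsh.
Qed.

Lemma assocP_neg_coth k p : (k < p)%nat ->
  assocP_neg k p (ch / sh)
  = / INR (fact p) * (/ t) ^ p *
    fsum (fun m => legendre_prod m (INR k) / (poch (1 + INR p) m * INR (fact m))
                   * (/ (t ^ 2 - 1)) ^ m) (S p).
Proof.
  intros Hk; pose proof sh_pos as Hsh; unfold assocP_neg; f_equal; f_equal.
  - replace ((ch / sh - 1) / (ch / sh + 1)) with ((/ t) ^ 2)
      by (field; repeat split; nra).
    apply Rpower_sqr_half, Rinv_0_lt_compat; lra.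
  - unfold hyp2F1; rewrite (Series_finite _ p).
    + apply fsum_ext; intros m Hm.
      replace ((1 - ch / sh) / 2) with (-1 * / (t ^ 2 - 1)) by (field; repeat split; nra).
      rewrite poch_opp_mul_poch_succ, Rpow_mult_distr.
      transitivity ((-1) ^ m * (-1) ^ m * (legendre_prod m (INR k)
                    / (poch (1 + INR p) m * INR (fact m)) * (/ (t ^ 2 - 1)) ^ m));
        [unfold Rdiv; ring|].
      rewrite pow_m1_sqr; ring.
    + intros n Hn; rewrite poch_opp_nat_over by lia; unfold Rdiv; ring.
Qed.

Lemma fsum_assocP_neg_coth p :
  INR (fact p) * t ^ p * sh ^ p *
  fsum (fun k => (-1) ^ k * (2 * INR k + 1) / ((INR p - INR k) * (INR p + INR k + 1))
                 * assocP_neg k p (ch / sh)) p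
  = / (2 * t) ^ p * fsum (fun m => binom p m * (t ^ 2 - 1) ^ (p - m) *
                                   ((-1) ^ (p + 1) * (harmonic (2 * p) - harmonic (p + m)))) (S p).
Proof.
  assert (Hy : 0 < t ^ 2 - 1) by nra.
  assert (Hpoch : forall m, 0 < poch (1 + INR p) m).
  { induction m as [|m IH]; simpl; [lra|]; pose proof (pos_INR p); pose proof (pos_INR m); nra. }
  rewrite (fsum_ext _ (fun k => / INR (fact p) * (/ t) ^ p * fsum (fun m =>
      (-1) ^ k * (2 * INR k + 1) / ((INR p - INR k) * (INR p + INR k + 1))
      * legendre_prod m (INR k) * (/ (t ^ 2 - 1)) ^ m / (poch (1 + INR p) m * INR (fact m))) (S p)))
    by (intros k Hk; rewrite assocP_neg_coth by auto; rewrite <- !fsum_scal;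
        apply fsum_ext; intros; unfold Rdiv; ring).
  rewrite fsum_scal, fsum_swap, sh_eq.
  match goal with |- _ * (_ * fsum ?g _) = _ =>
    transitivity (/ (2 * t) ^ p * ((t ^ 2 - 1) ^ p * fsum g (S p))) end.
  { pose proof (INR_fact_lt_0 p).
    match goal with |- context [fsum ?g (S p)] => set (sum := fsum g (S p)) end.
    unfold Rdiv; rewrite !Rpow_mult_distr, !pow_inv, !Rpow_mult_distr.
    field; repeat split; try lra; apply pow_nonzero; lra. }
  f_equal; rewrite <- fsum_scal; apply fsum_ext; intros m Hm.
  rewrite (fsum_ext _ (fun k => (/ (t ^ 2 - 1)) ^ m / (poch (1 + INR p) m * INR (fact m)) *
      ((-1) ^ k * (2 * INR k + 1) / ((INR p - INR k) * (INR p + INR k + 1))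
       * legendre_prod m (INR k)))) by (intros; unfold Rdiv; ring).
  rewrite fsum_scal, fsum_legendre_weight_prod, legendre_prod_nat by lia.
  replace ((t ^ 2 - 1) ^ p) with ((t ^ 2 - 1) ^ (p - m) * (t ^ 2 - 1) ^ m)
    by (rewrite <- pow_add; f_equal; lia).
  pose proof (INR_fact_lt_0 m); pose proof (Hpoch m).
  rewrite pow_inv; field; repeat split; try lra; apply pow_nonzero; lra.
Qed.

Lemma assocP_sum_closed_form p :
  INR (fact p) * t ^ p * sh ^ p *
    ( (-1) ^ p / INR (fact (2 * p)) * (digamma (INR (2 * p + 1)) - digamma 1)
        * assocP_pp p (ch / sh)
      + sumZ 0 (Z.of_nat p - 1)
          (fun k => powerRZ (-1) k * (2 * IZR k + 1)
                    / (IZR (Z.of_nat p - k) * IZR (Z.of_nat p + k + 1))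
                    * assocP_neg (Z.to_nat k) p (ch / sh)) )
  = / (2 * t) ^ p
    * fsum (fun m => binom p m * (t ^ 2 - 1) ^ (p - m) * ((-1) ^ p * harmonic (p + m))) (S p).
Proof.
  pose proof sh_pos as Hsh.
  replace (Z.of_nat p - 1)%Z with (0 + Z.of_nat p - 1)%Z by lia.
  rewrite sumZ_fsum, plus_INR, digamma_nat_succ_sub_1, assocP_pp_coth.
  rewrite (fsum_ext _ (fun k => (-1) ^ k * (2 * INR k + 1) / ((INR p - INR k) * (INR p + INR k + 1))
                                * assocP_neg k p (ch / sh)))
    by (intros k Hk; rewrite Z.add_0_l, Nat2Z.id, <- pow_powerRZ, <- INR_IZR_INZ, minus_IZR,
                      !plus_IZR, <- !INR_IZR_INZ; reflexivity).
  rewrite Rmult_plus_distr_l, fsum_assocP_neg_coth.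
  assert (Hbinom : t ^ p * t ^ p
                   = fsum (fun m => binom p m * (t ^ 2 - 1) ^ (p - m)) (S p))
    by (rewrite <- binomial_one_plus, <- Rpow_mult_distr; f_equal; ring).
  transitivity (/ (2 * t) ^ p * ((-1) ^ p * harmonic (2 * p) * (t ^ p * t ^ p)) +
     / (2 * t) ^ p * fsum (fun m => binom p m * (t ^ 2 - 1) ^ (p - m) *
                          ((-1) ^ (p + 1) * (harmonic (2 * p) - harmonic (p + m)))) (S p)).
  - f_equal; pose proof (INR_fact_lt_0 p); pose proof (INR_fact_lt_0 (2 * p)).
    rewrite !Rpow_mult_distr, !pow_inv; field; repeat split; try lra; apply pow_nonzero; lra.
  - rewrite Hbinom, <- Rmult_plus_distr_l, <- fsum_scal, <- fsum_plus; f_equal.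
    apply fsum_ext; intros; rewrite pow_add; ring.
Qed.

End CothOfExp.

Lemma exp_IZR_mul k a : exp (IZR k * a) = powerRZ (exp a) k.
Proof. rewrite powerRZ_Rpower by apply exp_pos; unfold Rpower; rewrite ln_exp; reflexivity. Qed.

Lemma exp_INR_mul n a : exp (INR n * a) = exp a ^ n.
Proof. rewrite <- Rpower_pow by apply exp_pos; unfold Rpower; rewrite ln_exp; reflexivity. Qed.

Theorem mainTheorem4 (p : nat) (eta : R) (Heta : 0 < eta) :
  let x := cosh eta in
  let cth := cosh eta / sinh eta in
  sumZ (- Z.of_nat p) (Z.of_nat p - 1)
    (fun k => powerRZ (-1) (k + 1) * exp (IZR k * eta) * logR p k x
              / IZR (Z.of_nat p - k))
  = INR (fact p) * exp (INR p * eta) * sinh eta ^ p *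
    ( (-1) ^ p / INR (fact (2 * p)) * (digamma (INR (2 * p + 1)) - digamma 1)
        * assocP_pp p cth
      + sumZ 0 (Z.of_nat p - 1)
          (fun k => powerRZ (-1) k * (2 * IZR k + 1)
                    / (IZR (Z.of_nat p - k) * IZR (Z.of_nat p + k + 1))
                    * assocP_neg (Z.to_nat k) p cth) ).
Proof.
  intros x cth; subst x cth.
  assert (Ht : 1 < exp eta) by (rewrite <- exp_0; apply exp_increasing; lra).
  replace (cosh eta) with ((exp eta + / exp eta) / 2)
    by (unfold cosh; rewrite exp_Ropp; reflexivity).
  replace (sinh eta) with ((exp eta - / exp eta) / 2)
    by (unfold sinh; rewrite exp_Ropp; reflexivity).
  rewrite exp_INR_mul, assocP_sum_closed_form by exact Ht.
  rewrite (sumZ_ext _ _ _ (fun k => powerRZ (-1) (k + 1) * powerRZ (exp eta) k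
                                    * logR p k ((exp eta + / exp eta) / 2) / IZR (Z.of_nat p - k)))
    by (intros k; rewrite exp_IZR_mul; reflexivity).
  apply sumZ_logR_closed_form; lra.
Qed.
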